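(* Let $k\mid n$. A set $\Pi$ of affine points of $\Sigma=\mathrm{PG}(2n,q)$ is the image under $\phi$ of the set of affine points of an $\mathbb{F}_{q^k}$-subplane of $\mathrm{PG}(2,q^n)$ secant to $l_\infty$ if and only if (i) $\Pi$ is a $2k$-dimensional affine subspace, and (ii) $\bar\Pi\cap H_\infty$ is a $(2k-1)$-dimensional subspace meeting exactly $q^k+1$ elements of $\mathcal D$, each in a $(k-1)$-dimensional subspace. Moreover, in that case $\bar\Pi\cap H_\infty$ meets each of these $q^k+1$ elements of $\mathcal D$ in an element of $\mathcal D_k$.
   Context: Let $q$ be a prime power and $n\ge1$. Points of $\mathrm{PG}(2,q^n)$ are written $(a,b,c)_{\mathbb{F}_{q^n}}$; $l_\infty$ is the line $c=0$; points off $l_\infty$ are affine. For $k\mid n$, an $\mathbb{F}_{q^k}$-subplane is a set $\{(su+tv+wz)_{\mathbb{F}_{q^n}}:(s,t,w)\in\mathbb{F}_{q^k}^3\setminus\{0\}\}$ for $\mathbb{F}_{q^n}$-independent $u,v,z\in\mathbb{F}_{q^n}^3$; it is secant to $l_\infty$ if it meets $l_\infty$ in $q^k+1$ points. Let $\Sigma=\mathrm{PG}(2n,q)$ be the projective space of the $\mathbb{F}_q$-vector space $\mathbb{F}_{q^n}\times\mathbb{F}_{q^n}\times\mathbb{F}_q$, points $(a,b,c)_{\mathbb{F}_q}$; $H_\infty$ is the hyperplane $c=0$, points off it are affine. An affine subspace is the set of affine points of a projective subspace not contained in $H_\infty$, with projective completion $\bar\Pi$. For $k\mid n$, $\mathcal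 D_k=\{\{(ax,bx,0)_{\mathbb{F}_q}:x\in\mathbb{F}_{q^k}^*\}:(a,b)\in\mathbb{F}_{q^n}^2\setminus\{(0,0)\}\}$, $\mathcal D=\mathcal D_n$. The ABB-map $\phi$ sends an affine point $(a,b,1)_{\mathbb{F}_{q^n}}$ to $(a,b,1)_{\mathbb{F}_q}$. *)

From HB Require Import structures.
From mathcomp Require Import all_boot all_order all_algebra all_field.
Set Implicit Arguments. Unset Strict Implicit. Unset Printing Implicit Defensive.
Import GRing.Theory.
Local Open Scope ring_scope.

(* F = F_q (q = #|F|), L = F_{q^n} as an F-extension (n = \dim {:L}).
   Sigma = PG(2n,q) is the projective space of the F-vector space
   SigV F L = L x L x F; projective subspaces = F-subspaces {vspace SigV F L}
   (projective dimension d <-> vector dimension d+1). *)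
Notation SigV F L := ((L * L) * (F^o))%type.

(* "P holds for exactly m elements" (for types that need not be finite). *)
Definition has_card (T : eqType) (P : T -> Prop) (m : nat) : Prop :=
  exists s : seq T, [/\ uniq s, size s = m & forall x, P x <-> x \in s].

(* U is the subspace (closure W) /\ H_inf, H_inf = {c = 0}. *)
Definition meet_Hinf (F : finFieldType) (L : fieldExtType F)
  (W U : {vspace SigV F L}) : Prop :=
  forall v : SigV F L, v \in U <-> (v \in W /\ v.2 = 0).

Definition not_in_Hinf (F : finFieldType) (L : fieldExtType F)
  (W : {vspace SigV F L}) : Prop :=
  exists2 v : SigV F L, v \in W & v.2 != 0.

(* The affine points of the projective subspace W, identified with the pairs
   (a,b) such that (a,b,1)_{F_q} lies in W. *)
Definition aff_part (F : finFieldType) (L : fieldExtType F)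
  (W : {vspace SigV F L}) (p : L * L) : Prop :=
  ((p.1, p.2), 1%R : F^o) \in W.

(* S is an element of D_k, where K = F_{q^k} (K = fullv gives D = D_n):
   S = {(a x, b x, 0) : x in K} (as an F-subspace; its nonzero vectors are the
   points of the element of the spread). *)
Definition Dk_elt (F : finFieldType) (L : fieldExtType F) (K : {vspace L})
  (S : {vspace SigV F L}) : Prop :=
  exists a b : L, (a, b) != (0, 0) /\
    forall v : SigV F L, v \in S <-> exists2 x : L, x \in K & v = ((a * x, b * x), 0).

Definition D_elt (F : finFieldType) (L : fieldExtType F) (S : {vspace SigV F L}) :=
  Dk_elt (fullv : {vspace L}) S.

(* PG(2,q^n): vectors in L^3 = 'rV[L]_3, points = 1-dim L-subspaces <[x]>.
   The K-subplane spanned by u v z: points <[s u + t v + w z]>, (s,t,w) in K^3 \ 0. *)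
Definition comb (L : fieldType) (u v z : 'rV[L]_3) (s t w : L) : 'rV[L]_3 :=
  s *: u + t *: v + w *: z.

(* the points of the subplane on l_inf (third coordinate 0) *)
Definition subplane_linf_pt (F : finFieldType) (L : fieldExtType F) (K : {vspace L})
  (u v z : 'rV[L]_3) (P : {vspace 'rV[L]_3}) : Prop :=
  exists s t w : L, [/\ s \in K, t \in K & w \in K] /\
    [/\ comb u v z s t w != 0, comb u v z s t w ord0 (inord 2) = 0
       & P = <[comb u v z s t w]>%VS].

Definition secant_subplane (F : finFieldType) (L : fieldExtType F) (K : {vspace L})
  (u v z : 'rV[L]_3) : Prop :=
  free [:: u; v; z] /\
  has_card (subplane_linf_pt K u v z) (#|F| ^ \dim K + 1)%N.

(* The affine points (a,b,1)_{F_{q^n}} of the subplane, given by (a,b);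
   phi maps them to (a,b,1)_{F_q}, also represented by (a,b). *)
Definition subplane_aff (F : finFieldType) (L : fieldExtType F) (K : {vspace L})
  (u v z : 'rV[L]_3) (p : L * L) : Prop :=
  exists s t w : L, [/\ s \in K, t \in K, w \in K,
    comb u v z s t w ord0 (inord 2) != 0
    & p = (comb u v z s t w ord0 (inord 0) / comb u v z s t w ord0 (inord 2),
           comb u v z s t w ord0 (inord 1) / comb u v z s t w ord0 (inord 2))].

Definition is_phi_subplane (F : finFieldType) (L : fieldExtType F) (K : {vspace L})
  (Pi : L * L -> Prop) : Prop :=
  exists u v z : 'rV[L]_3, secant_subplane K u v z /\
    forall p, Pi p <-> subplane_aff K u v z p.

Definition cond_ii (F : finFieldType) (L : fieldExtType F) (k : nat)
  (U : {vspace SigV F L}) : Prop :=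
  [/\ \dim U = (2 * k)%N,
      has_card (fun S => D_elt S /\ (U :&: S)%VS != 0%VS) (#|F| ^ k + 1)%N
    & forall S, D_elt S -> (U :&: S)%VS != 0%VS -> \dim (U :&: S) = k].

From HB Require Import structures.
From mathcomp Require Import all_boot all_order all_algebra all_field.
From mathcomp Require Import ring.
Set Implicit Arguments. Unset Strict Implicit. Unset Printing Implicit Defensive.
Import GRing.Theory.
Local Open Scope ring_scope.

(* The affine points of an F_{q^k}-subplane secant to l_inf are, in the chart
   given by two of its points A, B at infinity and an affine point z, exactly
   the points p0 + s a + t b with s, t in F_{q^k} and a, b independent over
   F_{q^n}.  Their phi-image is therefore the affine 2k-space through p0 with
   direction U = {(s a + t b, 0)}, and the element {(x w, 0)} of D meets U iff
   w is proportional to some s a + t b, in which case it meets U in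
   {(x (s a + t b), 0) : x in F_{q^k}}, an element of D_k.
   Conversely, if U has dimension 2k and meets q^k + 1 >= 2 elements of D in
   k-spaces, pick two of them, {(x w1, 0)} and {(x w2, 0)}: then
   U = {(x w1 + y w2, 0) : x in V1, y in V2}.  The element of D through
   x w1 + y w2 meets U in a k-space whose w1-coordinates fill V1, which gives
   (y/x) V1 <= V2 and symmetrically.  Hence V1/x0 is a k-dimensional
   subspace closed under products, i.e. F_{q^k}, and U has the shape above. *)

Lemma pairD (U V : nmodType) (p q : U * V) : p + q = (p.1 + q.1, p.2 + q.2).
Proof. by []. Qed.

Section PhiSubplanes.
Variables (F : finFieldType) (L : fieldExtType F).

Definition det2 (w w' : L * L) : L := w.1 * w'.2 - w.2 * w'.1.

Definition scale2 (c : L) (w : L * L) : L * L := (c * w.1, c * w.2).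

Lemma det2_scale2 c c' w w' : det2 (scale2 c w) (scale2 c' w') = c * c' * det2 w w'.
Proof. by rewrite /det2 /=; ring. Qed.

Definition lin2 (a b : L * L) (s t : L) : L * L :=
  (s * a.1 + t * b.1, s * a.2 + t * b.2).

Lemma det2_lin2 a b s t s' t' :
  det2 (lin2 a b s t) (lin2 a b s' t') = (s * t' - t * s') * det2 a b.
Proof. by rewrite /det2 /lin2 /=; ring. Qed.

Lemma det2_eq0_proportional w w' : w != 0 -> det2 w w' = 0 ->
  exists c, w' = scale2 c w.
Proof.
case: w => w1 w2; case: w' => v1 v2; rewrite /det2 /= => nz /eqP.
rewrite subr_eq0 => /eqP e.
have [w10|w10] := eqVneq w1 0.
  have w20 : w2 != 0 by move: nz; rewrite w10 xpair_eqE eqxx.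
  exists (v2 / w2); rewrite /scale2 /=; congr (_,_); last by field.
  move: e; rewrite w10 mul0r => /esym /eqP; rewrite mulf_eq0 (negbTE w20) /=.
  by move/eqP ->; rewrite mulr0.
exists (v1 / w1); rewrite /scale2 /=; congr (_,_); first by field.
by apply: (mulfI w10); rewrite e; field.
Qed.

Section Basis.
Variables (a b : L * L).
Hypothesis det_ab : det2 a b != 0.

Lemma lin2_eq0 s t : (lin2 a b s t == 0) = ((s, t) == (0, 0)).
Proof.
apply/idP/idP => [/eqP e|/eqP [-> ->]]; last by rewrite /lin2 !mul0r addr0.
have := det2_lin2 a b s t 1 0; have := det2_lin2 a b s t 0 1.
rewrite e /det2 /= !mul0r subrr => /esym/eqP + /esym/eqP.
rewrite !mulf_eq0 (negbTE det_ab) !orbF !mulr1 !mulr0 subr0 sub0r oppr_eq0.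
by move=> s0 t0; rewrite xpair_eqE s0 t0.
Qed.

Lemma lin2_neq0 s t : (s, t) != (0, 0) -> lin2 a b s t != 0.
Proof. by rewrite lin2_eq0. Qed.

Lemma lin2_inj s t s' t' : lin2 a b s t = lin2 a b s' t' -> s = s' /\ t = t'.
Proof.
move=> [e1 e2]; have : lin2 a b (s - s') (t - t') == 0.
  apply/eqP; rewrite /lin2 -[X in _ = X]/(0, 0).
  by congr (_, _); apply/eqP; rewrite !mulrBl addrACA -opprD subr_eq0 ?e1 ?e2.
by rewrite lin2_eq0 xpair_eqE !subr_eq0 => /andP [/eqP -> /eqP ->].
Qed.

Lemma det2_neq0l : a != 0.
Proof. by apply: contraNneq det_ab => ->; rewrite /det2 /= !mul0r subrr. Qed.
Lemma det2_neq0r : b != 0.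
Proof. by apply: contraNneq det_ab => ->; rewrite /det2 /= !mulr0 subrr. Qed.

End Basis.

Definition spread_vec (w : L * L) (x : L) : SigV F L := ((x * w.1, x * w.2), 0).

Fact spread_vec_is_linear w : linear (spread_vec w).
Proof.
move=> c x y; rewrite /spread_vec !mulrDl -!scalerAl.
change (((c *: (x * w.1) + y * w.1, c *: (x * w.2) + y * w.2), (0 : F^o)) =
        ((c *: (x * w.1) + y * w.1, c *: (x * w.2) + y * w.2), c *: (0 : F^o) + 0)).
by rewrite scaler0 addr0.
Qed.
HB.instance Definition _ w :=
  GRing.isLinear.Build F L (SigV F L) *:%R (spread_vec w) (spread_vec_is_linear w).

Local Notation spread_lin w := (linfun (spread_vec w)).

Definition spread_elt (w : L * L) : {vspace SigV F L} := (spread_lin w @: fullv)%VS.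

Lemma spread_linE w x : spread_lin w x = spread_vec w x.
Proof. by rewrite lfunE. Qed.

Lemma spread_vec_add a b x y : spread_vec a x + spread_vec b y = (lin2 a b x y, 0).
Proof. by rewrite /spread_vec pairD /= addr0. Qed.

Lemma spread_vec_lin2 a b s t x :
  spread_vec (lin2 a b s t) x = spread_vec a (x * s) + spread_vec b (x * t).
Proof. by rewrite spread_vec_add /spread_vec /lin2 /= !mulrDr !mulrA. Qed.

Lemma spread_vec_scale w c x : spread_vec (scale2 c w) x = spread_vec w (x * c).
Proof. by rewrite /spread_vec /= !mulrA. Qed.

Lemma spread_vec_inj w : w != 0 -> injective (spread_vec w).
Proof.
case: w => w1 w2; rewrite xpair_eqE negb_and /spread_vec /= => nz x y [e1 e2].
by case/orP: nz => nz; [apply: (mulIf nz) | apply: (mulIf nz)].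
Qed.

Lemma dim_spread_img w (V : {vspace L}) : w != 0 -> \dim (spread_lin w @: V) = \dim V.
Proof.
move=> nz; apply: limg_dim_eq; apply/eqP; rewrite -subv0; apply/subvP => x.
rewrite memv_cap memv_ker spread_linE -(linear0 (spread_vec w)) memv0.
by case/andP=> _ /eqP /(spread_vec_inj nz) ->.
Qed.

Lemma memv_spread_elt w v : v \in spread_elt w <-> exists x, v = spread_vec w x.
Proof.
split; first by case/memv_imgP => x _ ->; exists x; rewrite spread_linE.
by case=> x ->; rewrite -spread_linE memv_img ?memvf.
Qed.

Lemma D_eltP S : D_elt S <-> exists2 w, w != 0 & S = spread_elt w.
Proof.
have spreadC w x : spread_vec w x = ((w.1 * x, w.2 * x), 0).
  by rewrite /spread_vec !(mulrC x).
split=> [[a [b [nz memS]]]|[w nz ->]].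
  exists (a, b) => //; apply/vspaceP => v; apply/idP/idP.
    by case/memS=> x _ ->; apply/memv_spread_elt; exists x; rewrite spreadC.
  by case/memv_spread_elt=> x ->; apply/memS; exists x; rewrite ?memvf ?spreadC.
exists w.1, w.2; split; first by case: w nz.
move=> v; split=> [/memv_spread_elt [x ->]|[x _ ->]].
  by exists x; rewrite ?memvf ?spreadC.
by apply/memv_spread_elt; exists x; rewrite spreadC.
Qed.

Lemma spread_elt_eq w w' : w != 0 -> w' != 0 ->
  (spread_elt w = spread_elt w') <-> (det2 w w' = 0).
Proof.
move=> nz nz'; split=> [e|].
  have /memv_spread_elt [x] : spread_vec w 1 \in spread_elt w'.
    by rewrite -e; apply/memv_spread_elt; exists 1.
  by rewrite /spread_vec /det2 !mul1r => -[-> ->]; rewrite -!mulrA (mulrC w'.1) subrr.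
case/(det2_eq0_proportional nz) => c ew'.
have c0 : c != 0.
  by apply: contraNneq nz' => c0; rewrite ew' c0 /scale2 !mul0r.
apply/vspaceP => v; rewrite ew'.
apply/idP/idP => /memv_spread_elt [x ->]; apply/memv_spread_elt.
  by exists (x / c); rewrite spread_vec_scale divfK.
by exists (x * c); rewrite spread_vec_scale.
Qed.

Lemma has_card_ext (T : eqType) (P Q : T -> Prop) m :
  (forall x, P x <-> Q x) -> has_card Q m -> has_card P m.
Proof. by move=> PQ [s [us sz memQ]]; exists s; split=> // x; rewrite PQ. Qed.

Lemma has_card_vspace (K : {vspace L}) :
  has_card (fun x => x \in K) (#|F| ^ \dim K)%N.
Proof.
pose KL : {vspace finvect_type L} := K.
exists (enum (mem KL)); split; first exact: enum_uniq.
  by rewrite -(card_vspace KL) cardE.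
by move=> x; rewrite (mem_enum (mem KL) x).
Qed.

(* [f] induces an injection of the projective line PG(1, K). *)
Lemma has_card_proj_line (K : {subfield L}) (T : eqType) (f : L -> L -> T) :
  (forall s t s' t', s \in K -> t \in K -> s' \in K -> t' \in K ->
     (s, t) != (0, 0) -> (s', t') != (0, 0) -> f s t = f s' t' <-> s * t' = t * s') ->
  has_card (fun x => exists s t, [/\ s \in K, t \in K, (s, t) != (0, 0) & x = f s t])
    (#|F| ^ \dim K + 1)%N.
Proof.
move=> feq; have [e [ue se me]] := has_card_vspace K.
have nz1 t : (1, t) != (0, 0) :> L * L by rewrite xpair_eqE oner_eq0.
have nz01 : (0, 1) != (0, 0) :> L * L by rewrite xpair_eqE oner_eq0 andbF.
exists ([seq f 1 t | t <- e] ++ [:: f 0 1]); split.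
- rewrite cat_uniq /= orbF andbT; apply/andP; split.
    rewrite map_inj_in_uniq // => t t' /me tK /me t'K.
    by move/(feq _ _ _ _ (mem1v _) tK (mem1v _) t'K (nz1 _) (nz1 _)); rewrite mulr1 mul1r.
  apply/negP => /mapP [t /me tK].
  move/(feq _ _ _ _ (mem0v _) (mem1v _) (mem1v _) tK nz01 (nz1 t)).
  by rewrite mul0r mulr1 => /eqP; rewrite eq_sym oner_eq0.
- by rewrite size_cat size_map se addn1.
move=> x; rewrite mem_cat; split=> [[s [t [sK tK nz ->]]]|].
  apply/orP; have [s0|s0] := eqVneq s 0.
    right; rewrite inE; apply/eqP/feq; rewrite ?mem0v ?mem1v //.
    by rewrite s0 !mul0r mulr0.
  left; apply/mapP; exists (t / s); first by apply/me; rewrite rpred_div.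
  by apply/feq; rewrite ?mem1v ?rpred_div // mulr1 mulrC divfK.
case/orP=> [/mapP [t /me tK ->]|]; first by exists 1, t; rewrite mem1v.
by rewrite inE => /eqP ->; exists 0, 1; rewrite mem0v mem1v.
Qed.

Definition spread_sum (a b : L * L) (V1 V2 : {vspace L}) : {vspace SigV F L} :=
  (spread_lin a @: V1 + spread_lin b @: V2)%VS.

Lemma memv_spread_sum a b V1 V2 v : v \in spread_sum a b V1 V2 <->
  exists x y, [/\ x \in V1, y \in V2 & v = spread_vec a x + spread_vec b y].
Proof.
split=> [/memv_addP [_ /memv_imgP [x xV ->] [_ /memv_imgP [y yV ->] ->]]|].
  by exists x, y; rewrite !spread_linE.
case=> x [y [xV yV ->]]; apply/memv_addP.
by exists (spread_lin a x); rewrite ?memv_img //; exists (spread_lin b y);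
  rewrite ?memv_img ?spread_linE.
Qed.

Lemma spread_sumC a b V1 V2 : spread_sum a b V1 V2 = spread_sum b a V2 V1.
Proof. exact: addvC. Qed.

Section SpreadSum.
Variables (a b : L * L).
Hypothesis det_ab : det2 a b != 0.

Lemma spread_vec_add_inj x y x' y' :
  spread_vec a x + spread_vec b y = spread_vec a x' + spread_vec b y' ->
  x = x' /\ y = y'.
Proof. by rewrite !spread_vec_add => /(congr1 fst) /(lin2_inj det_ab). Qed.

Lemma dim_spread_sum V1 V2 : \dim (spread_sum a b V1 V2) = (\dim V1 + \dim V2)%N.
Proof.
rewrite dimv_disjoint_sum ?dim_spread_img ?(det2_neq0l det_ab) ?(det2_neq0r det_ab) //.
apply/eqP; rewrite -subv0; apply/subvP => v; rewrite memv_cap memv0.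
case/andP=> /memv_imgP [x _ ->] /memv_imgP [y _]; rewrite !spread_linE => e.
have : spread_vec a x + spread_vec b 0 = spread_vec a 0 + spread_vec b y.
  by rewrite e !linear0 addr0 add0r.
by case/spread_vec_add_inj=> -> _; rewrite linear0.
Qed.

Lemma spread_sum_coord V1 V2 x y :
  spread_vec a x + spread_vec b y \in spread_sum a b V1 V2 -> x \in V1 /\ y \in V2.
Proof.
by case/memv_spread_sum=> x' [y' [x'V y'V /spread_vec_add_inj [-> ->]]].
Qed.

Variable K : {subfield L}.
Local Notation U := (spread_sum a b K K).

Lemma spread_sum_meet S : D_elt S -> (U :&: S)%VS != 0%VS ->
  exists s t, [/\ s \in K, t \in K, (s, t) != (0, 0) & S = spread_elt (lin2 a b s t)].
Proof.
case/D_eltP=> w nz -> ne; have := memv_pick (U :&: spread_elt w)%VS.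
rewrite memv_cap => /andP [/memv_spread_sum [s [t [sK tK ev]]] /memv_spread_elt [x ex]].
have st0 : (s, t) != (0, 0).
  apply: contraNneq ne => -[s0 t0]; rewrite -vpick0 ev s0 t0 !linear0 addr0.
  exact: eqxx.
exists s, t; split=> //; apply/esym/spread_elt_eq => //; first exact: lin2_neq0.
move: ev; rewrite ex spread_vec_add /spread_vec /lin2 /det2 => -[<- <-] /=.
by rewrite -!mulrA (mulrC w.1) subrr.
Qed.

Lemma cap_spread_sum s t : s \in K -> t \in K -> (s, t) != (0, 0) ->
  (U :&: spread_elt (lin2 a b s t))%VS = (spread_lin (lin2 a b s t) @: K)%VS.
Proof.
move=> sK tK nz; apply/vspaceP => v; apply/idP/idP.
  rewrite memv_cap => /andP [/memv_spread_sum [s' [t' [s'K t'K ->]]]].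
  case/memv_spread_elt=> l; rewrite spread_vec_lin2 => /spread_vec_add_inj [e1 e2].
  apply/memv_imgP; exists l; last by rewrite spread_linE spread_vec_lin2 e1 e2.
  have [s0|s0] := eqVneq s 0.
    have t0 : t != 0 by move: nz; rewrite s0 xpair_eqE eqxx.
    by rewrite -[l](mulfK t0) -e2 rpred_div.
  by rewrite -[l](mulfK s0) -e1 rpred_div.
case/memv_imgP=> l lK ->; rewrite memv_cap; apply/andP; split.
  by apply/memv_spread_sum; exists (l * s), (l * t); rewrite ?rpredM ?spread_linE
    ?spread_vec_lin2.
by apply/memv_spread_elt; exists l; rewrite spread_linE.
Qed.

Lemma Dk_elt_cap_spread_sum S : D_elt S -> (U :&: S)%VS != 0%VS ->
  Dk_elt K (U :&: S)%VS.
Proof.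
move=> DS ne; have [s [t [sK tK nz ->]]] := spread_sum_meet DS ne.
rewrite cap_spread_sum //; set w := lin2 a b s t.
exists w.1, w.2; split; first by rewrite -surjective_pairing lin2_neq0.
move=> v; split=> [/memv_imgP [x xK ->]|[x xK ->]].
  by exists x; rewrite // spread_linE /spread_vec !(mulrC x).
by apply/memv_imgP; exists x; rewrite // spread_linE /spread_vec !(mulrC x).
Qed.

Lemma cond_ii_spread_sum : cond_ii (\dim K) U.
Proof.
split; first by rewrite dim_spread_sum addnn -mul2n.
  apply: (has_card_ext (Q := fun S => exists s t,
    [/\ s \in K, t \in K, (s, t) != (0, 0) & S = spread_elt (lin2 a b s t)])).
    move=> S; split=> [[DS ne]|[s [t [sK tK nz ->]]]]; first exact: spread_sum_meet.
    split; first by apply/D_eltP; exists (lin2 a b s t); rewrite ?lin2_neq0.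
    by rewrite cap_spread_sum // -dimv_eq0 dim_spread_img ?lin2_neq0 // -lt0n adim_gt0.
  apply: has_card_proj_line => s t s' t' sK tK s'K t'K nz nz'.
  rewrite spread_elt_eq ?lin2_neq0 // det2_lin2.
  split=> [/eqP|->]; last by rewrite subrr mul0r.
  by rewrite mulf_eq0 (negbTE det_ab) orbF subr_eq0 => /eqP.
move=> S DS ne; have [s [t [sK tK nz ->]]] := spread_sum_meet DS ne.
by rewrite cap_spread_sum // dim_spread_img ?lin2_neq0.
Qed.

End SpreadSum.

Lemma img_preim_spread w (U : {vspace SigV F L}) :
  (spread_lin w @: (spread_lin w @^-1: U))%VS = (U :&: spread_elt w)%VS.
Proof. by rewrite -lpreim_cap_limg lpreimK ?capvSr. Qed.

Lemma dim_preim_spread w (U : {vspace SigV F L}) : w != 0 ->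
  \dim (spread_lin w @^-1: U) = \dim (U :&: spread_elt w).
Proof. by move=> nz; rewrite -img_preim_spread dim_spread_img. Qed.

Lemma spread_sum_preim w1 w2 (U : {vspace SigV F L}) : det2 w1 w2 != 0 ->
  \dim U = (\dim (U :&: spread_elt w1) + \dim (U :&: spread_elt w2))%N ->
  U = spread_sum w1 w2 (spread_lin w1 @^-1: U) (spread_lin w2 @^-1: U).
Proof.
move=> det12 dimU; apply/esym/eqP.
rewrite eqEdim dim_spread_sum // !dim_preim_spread ?(det2_neq0l det12) ?(det2_neq0r det12) //.
by rewrite -dimU leqnn andbT /spread_sum !img_preim_spread subv_add !capvSl.
Qed.

Lemma spread_sum_coset w1 w2 (K : {vspace L}) x0 y0 :
  spread_sum w1 w2 (K * <[x0]>) (K * <[y0]>) =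
  spread_sum (scale2 x0 w1) (scale2 y0 w2) K K.
Proof.
apply/vspaceP => v; apply/idP/idP => /memv_spread_sum [x [y [xV yV ->]]];
  apply/memv_spread_sum.
  case/memv_cosetP: xV => s sK ->; case/memv_cosetP: yV => t tK ->.
  by exists s, t; rewrite !spread_vec_scale.
by exists (x * x0), (y * y0); rewrite -!spread_vec_scale !memv_mul ?memv_line.
Qed.

(* A vector space of the right dimension closed under products is the
   subfield F_{q^k}: both consist of the roots of X^(q^k) - X. *)
Lemma vspace_eq_subfield (K : {subfield L}) (V : {vspace L}) :
  1 \in V -> {in V &, forall x y, x * y \in V} -> \dim V = \dim K -> V = K.
Proof.
move=> V1 Vmul dimV.
have Vaspace : is_aspace V.
  by rewrite /is_aspace has_algid1 //=; apply/prodvP.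
have sVK : (V <= K)%VS.
  apply/subvP => x xV.
  have := Fermat's_little_theorem K x; have := Fermat's_little_theorem (ASpace Vaspace) x.
  by rewrite /= xV /= dimV => <- ->.
by apply/eqP; rewrite eqEdim sVK dimV leqnn.
Qed.

Lemma subfield_coset (K : {subfield L}) (V : {vspace L}) x0 :
  x0 \in V -> x0 != 0 -> {in V &, forall x y, x * y / x0 \in V} ->
  \dim V = \dim K -> V = (K * <[x0]>)%VS.
Proof.
move=> x0V x0nz Vmul dimV; have x0U : x0 \is a GRing.unit by rewrite unitfE.
suff <- : (V * <[x0^-1]>)%VS = K.
  by rewrite -prodvA prodv_line mulVf // prodv1.
apply: vspace_eq_subfield; last by rewrite dim_cosetv_unit ?unitrV.
  by apply/memv_cosetP; exists x0; rewrite ?mulfV.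
move=> _ _ /memv_cosetP [x xV ->] /memv_cosetP [y yV ->]; apply/memv_cosetP.
by exists (x * y / x0); rewrite ?Vmul //; field.
Qed.

Lemma proj_line_card_gt1 n : (1 < #|F| ^ n + 1)%N.
Proof. by rewrite addn1 ltnS expn_gt0 ltnW // finNzRing_gt1. Qed.

Lemma has_card_two (T : eqType) (P : T -> Prop) m : has_card P m -> (1 < m)%N ->
  exists x y, [/\ x != y, P x & P y].
Proof.
case=> s [us <- memP]; case: s us memP => [|x [|y s]] //= /andP [xy _] memP _.
exists x, y; split; rewrite ?memP ?inE ?eqxx ?orbT //.
by move: xy; rewrite inE negb_or => /andP [].
Qed.

Section KDimensionalCaps.
Variables (K : {subfield L}) (U : {vspace SigV F L}).
Hypothesis dim_cap :
  forall S, D_elt S -> (U :&: S)%VS != 0%VS -> \dim (U :&: S) = \dim K.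

(* Project the K-dimensional intersection of U with the spread element
   through x w1 + y w2 onto its w1-coordinate: this is onto V1. *)
Lemma spread_sum_ratio w1 w2 V1 V2 x y x' :
  det2 w1 w2 != 0 -> U = spread_sum w1 w2 V1 V2 -> \dim V1 = \dim K ->
  x \in V1 -> x != 0 -> y \in V2 -> x' \in V1 -> x' * y / x \in V2.
Proof.
move=> det12 defU dimV1 xV1 xnz yV2 x'V1.
pose c := lin2 w1 w2 x y; pose P := (spread_lin c @^-1: U)%VS.
have cnz : c != 0 by rewrite lin2_neq0 // xpair_eqE negb_and xnz.
have coordU l : l \in P -> l * x \in V1 /\ l * y \in V2.
  by move=> lP; apply: (spread_sum_coord det12); rewrite -spread_vec_lin2 -spread_linE -defU memv_preim.
have dimP : \dim P = \dim K.
  rewrite dim_preim_spread // dim_cap //; first by apply/D_eltP; exists c.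
  have cU : spread_vec c 1 \in (U :&: spread_elt c)%VS.
    rewrite memv_cap; apply/andP; split; last by apply/memv_spread_elt; exists 1.
    by rewrite defU spread_vec_lin2 !mul1r; apply/memv_spread_sum; exists x, y.
  apply: contraTneq cU => ->; rewrite memv0 -(linear0 (spread_vec c)).
  by apply/negP => /eqP /(spread_vec_inj cnz) /eqP; rewrite oner_eq0.
have PV1 : (P * <[x]>)%VS = V1.
  apply/eqP; rewrite eqEdim dim_cosetv_unit ?unitfE // dimP dimV1 leqnn andbT.
  by apply/subvP => _ /memv_cosetP [l /coordU [lx _] ->].
move: x'V1; rewrite -PV1 => /memv_cosetP [l /coordU [_ ly] ->].
by rewrite mulrAC mulfK.
Qed.

Lemma spread_sum_cosets w1 w2 V1 V2 x0 y0 :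
  det2 w1 w2 != 0 -> U = spread_sum w1 w2 V1 V2 ->
  \dim V1 = \dim K -> \dim V2 = \dim K ->
  x0 \in V1 -> x0 != 0 -> y0 \in V2 -> y0 != 0 ->
  V1 = (K * <[x0]>)%VS /\ V2 = (K * <[y0]>)%VS.
Proof.
move=> det12 defU dimV1 dimV2 x0V x0nz y0V y0nz.
have det21 : det2 w2 w1 != 0.
  by rewrite (_ : det2 w2 w1 = - det2 w1 w2) ?oppr_eq0 // /det2; ring.
have ratio12 := spread_sum_ratio det12 defU dimV1.
have ratio21 := spread_sum_ratio det21 (etrans defU (spread_sumC _ _ _ _)) dimV2.
have defV1 : V1 = (K * <[x0]>)%VS.
  apply: subfield_coset => // x x' xV x'V; have [->|xnz] := eqVneq x 0.
    by rewrite !mul0r mem0v.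
  have -> : x * x' / x0 = x' * y0 / x0 * x / y0 by field; rewrite x0nz y0nz.
  exact: ratio21 y0V y0nz xV (ratio12 _ _ _ x0V x0nz y0V x'V).
split=> //; apply/esym/eqP.
rewrite eqEdim dim_cosetv_unit ?unitfE // dimV2 leqnn andbT.
apply/subvP => _ /memv_cosetP [u uK ->].
have -> : u * y0 = u * x0 * y0 / x0 by field.
by apply: ratio12 x0V x0nz y0V _; rewrite defV1 memv_mul ?memv_line.
Qed.

End KDimensionalCaps.

Lemma cond_ii_spread_sumP (K : {subfield L}) (U : {vspace SigV F L}) :
  cond_ii (\dim K) U -> exists a b, det2 a b != 0 /\ U = spread_sum a b K K.
Proof.
case=> dimU cardS dim_cap.
have [S1 [S2 [S12 [DS1 ne1] [DS2 ne2]]]] := has_card_two cardS (proj_line_card_gt1 _).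
move: DS1 DS2 S12 ne1 ne2 => /D_eltP [w1 w1nz ->] /D_eltP [w2 w2nz ->] S12 ne1 ne2.
have det12 : det2 w1 w2 != 0 by apply: contra_neq S12 => /(spread_elt_eq w1nz w2nz).
have dimV w : w != 0 -> (U :&: spread_elt w)%VS != 0%VS ->
    \dim (spread_lin w @^-1: U) = \dim K.
  by move=> nz ne; rewrite dim_preim_spread // dim_cap //; apply/D_eltP; exists w.
set V1 := (spread_lin w1 @^-1: U)%VS; set V2 := (spread_lin w2 @^-1: U)%VS.
have dimV1 : \dim V1 = \dim K by exact: dimV.
have dimV2 : \dim V2 = \dim K by exact: dimV.
have defU : U = spread_sum w1 w2 V1 V2.
  by apply: spread_sum_preim; rewrite // -!dim_preim_spread // dimV1 dimV2 dimU addnn -mul2n.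
have Vneq0 V : \dim V = \dim K -> V != 0%VS.
  by rewrite -dimv_eq0 => ->; rewrite -lt0n adim_gt0.
set x0 := vpick V1; set y0 := vpick V2.
have [x0V y0V] : x0 \in V1 /\ y0 \in V2 by split; apply: memv_pick.
have [x0nz y0nz] : x0 != 0 /\ y0 != 0 by rewrite !vpick0 !Vneq0.
have [defV1 defV2] := spread_sum_cosets dim_cap det12 defU dimV1 dimV2 x0V x0nz y0V y0nz.
exists (scale2 x0 w1), (scale2 y0 w2); split; first by rewrite det2_scale2 !mulf_neq0.
by rewrite defU defV1 defV2 spread_sum_coset.
Qed.

Definition Kplane_aff (K : {vspace L}) (p0 a b p : L * L) : Prop :=
  exists s t, [/\ s \in K, t \in K & p = p0 + lin2 a b s t].

Definition crd (x : 'rV[L]_3) (j : nat) : L := x ord0 (inord j).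

Lemma row3_eq (x y : 'rV[L]_3) :
  crd x 0 = crd y 0 -> crd x 1 = crd y 1 -> crd x 2 = crd y 2 -> x = y.
Proof.
move=> e0 e1 e2; apply/rowP => i; rewrite -[i]inord_val.
by case: i => [[|[|[|n]]] ?].
Qed.

Lemma crd_comb (u v z : 'rV[L]_3) s t w j :
  crd (comb u v z s t w) j = s * crd u j + t * crd v j + w * crd z j.
Proof. by rewrite /crd !mxE. Qed.

Lemma crdZ (x : 'rV[L]_3) c j : crd (c *: x) j = c * crd x j.
Proof. by rewrite /crd mxE. Qed.

Lemma crd0 j : crd 0 j = 0.
Proof. by rewrite /crd mxE. Qed.

Definition mkrow (x y w : L) : 'rV[L]_3 := \row_(i < 3) nth 0 [:: x; y; w] i.

Lemma crd_mkrow0 x y w : crd (mkrow x y w) 0 = x. Proof. by rewrite /crd mxE inordK. Qed.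
Lemma crd_mkrow1 x y w : crd (mkrow x y w) 1 = y. Proof. by rewrite /crd mxE inordK. Qed.
Lemma crd_mkrow2 x y w : crd (mkrow x y w) 2 = w. Proof. by rewrite /crd mxE inordK. Qed.

Definition c12 (x : 'rV[L]_3) : L * L := (crd x 0, crd x 1).

Lemma line_eq (x y : 'rV[L]_3) : x != 0 -> y != 0 -> crd x 2 = 0 -> crd y 2 = 0 ->
  (<[x]>%VS = <[y]>%VS <-> det2 (c12 x) (c12 y) = 0).
Proof.
move=> x0 y0 x2 y2; split=> [e|].
  have /vlineP [c ->] : x \in <[y]>%VS by rewrite -e memv_line.
  by rewrite /det2 /c12 /= !crdZ; ring.
have x12 : c12 x != 0.
  by apply: contraNneq x0 => -[e0 e1]; apply/eqP/row3_eq; rewrite ?crd0.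
case/(det2_eq0_proportional x12) => c [e0 e1].
have ey : y = c *: x by apply: row3_eq; rewrite crdZ ?e0 ?e1 ?x2 ?y2 ?mulr0.
have c0 : c != 0 by apply: contraNneq y0 => c0; rewrite ey c0 scale0r.
apply/vspaceP => r; rewrite ey; apply/vlineP/vlineP => -[k ->].
  by exists (k / c); rewrite scalerA divfK.
by exists (k * c); rewrite scalerA.
Qed.

Section AffineChart.
Variables (K : {subfield L}) (u v z : 'rV[L]_3).
Hypothesis z2 : crd z 2 != 0.
Local Notation Z := (crd z 2).

(* Coordinates on l_inf of the projection of x from the affine point z,
   scaled by Z. *)
Definition cproj (x : 'rV[L]_3) : L * L :=
  (Z * crd x 0 - crd x 2 * crd z 0, Z * crd x 1 - crd x 2 * crd z 1).

Lemma cproj_comb s t w : cproj (comb u v z s t w) = lin2 (cproj u) (cproj v) s t.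
Proof. by rewrite /cproj /lin2 /= !crd_comb; congr (_, _); ring. Qed.

Lemma cproj_inf x : crd x 2 = 0 -> cproj x = scale2 Z (c12 x).
Proof. by rewrite /cproj => ->; rewrite !mul0r !subr0. Qed.

Lemma comb_change_basis m1 m2 m0 s1 t1 w1 s2 t2 w2 :
  comb u v z (m1 * s1 + m2 * s2) (m1 * t1 + m2 * t2) (m1 * w1 + m2 * w2 + m0) =
  comb (comb u v z s1 t1 w1) (comb u v z s2 t2 w2) z m1 m2 m0.
Proof. by apply/rowP => i; rewrite !mxE; ring. Qed.

Variables (s1 t1 w1 s2 t2 w2 : L).
Hypotheses (K1 : [/\ s1 \in K, t1 \in K & w1 \in K])
           (K2 : [/\ s2 \in K, t2 \in K & w2 \in K]).
Local Notation A := (comb u v z s1 t1 w1).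
Local Notation B := (comb u v z s2 t2 w2).
Hypotheses (A2 : crd A 2 = 0) (B2 : crd B 2 = 0) (detAB : det2 (c12 A) (c12 B) != 0).
Local Notation p0 := (scale2 Z^-1 (c12 z)).
Local Notation a := (scale2 Z^-1 (c12 A)).
Local Notation b := (scale2 Z^-1 (c12 B)).

(* A and B together with z form a K-basis of the subplane. *)
Lemma coeff_det_neq0 : s1 * t2 - t1 * s2 != 0.
Proof.
have := det2_lin2 (cproj u) (cproj v) s1 t1 s2 t2.
rewrite -(cproj_comb _ _ w1) -(cproj_comb _ _ w2) (cproj_inf A2) (cproj_inf B2) det2_scale2.
by move=> e; apply: contraNneq (mulf_neq0 (mulf_neq0 z2 z2) detAB) => d0;
  rewrite e d0 mul0r.
Qed.

Lemma chart_point m1 m2 m0 : m0 != 0 ->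
  let x := comb A B z m1 m2 m0 in
  [/\ crd x 2 = m0 * Z & (crd x 0 / crd x 2, crd x 1 / crd x 2) = p0 + lin2 a b (m1 / m0) (m2 / m0)].
Proof.
move=> m0nz x; have x2 : crd x 2 = m0 * Z by rewrite crd_comb A2 B2 !mulr0 !add0r.
split=> //; rewrite x2 pairD /lin2 /scale2 /= !crd_comb.
by congr (_, _); field; rewrite z2 m0nz.
Qed.

Lemma subplane_aff_chart p : subplane_aff K u v z p <-> Kplane_aff K p0 a b p.
Proof.
have [s1K t1K w1K] := K1; have [s2K t2K w2K] := K2.
split=> [[s [t [w [sK tK wK]]]]|[m1 [m2 [m1K m2K ->]]]].
  rewrite -/(crd _ 2) -/(crd _ 0) -/(crd _ 1).
  have d0 := coeff_det_neq0; set d := s1 * t2 - t1 * s2 in d0.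
  pose m1 := (s * t2 - t * s2) / d; pose m2 := (s1 * t - t1 * s) / d.
  pose m0 := w - m1 * w1 - m2 * w2.
  have -> : comb u v z s t w = comb A B z m1 m2 m0.
    rewrite -comb_change_basis; congr comb; rewrite /m0 /m1 /m2 /d; last by ring.
      by field; exact: d0.
    by field; exact: d0.
  have [m1K m2K] : m1 \in K /\ m2 \in K by split; rewrite rpred_div ?rpredB ?rpredM.
  have m0K : m0 \in K.
    by rewrite /m0; apply: rpredB; first apply: rpredB; try apply: rpredM.
  have [m00|m0nz] := eqVneq m0 0.
    by rewrite crd_comb A2 B2 m00 !mulr0 !add0r mul0r eqxx.
  have [_ ->] := chart_point m1 m2 m0nz => _ ->.
  by exists (m1 / m0), (m2 / m0); split=> //; apply: rpred_div.
exists (m1 * s1 + m2 * s2), (m1 * t1 + m2 * t2), (m1 * w1 + m2 * w2 + 1).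
rewrite -/(crd _ 2) -/(crd _ 0) -/(crd _ 1) comb_change_basis.
have [-> ->] := chart_point m1 m2 (oner_neq0 L); rewrite !divr1 mul1r.
by split; rewrite ?rpredD ?rpredM ?mem1v.
Qed.

Lemma subplane_aff_Kplane_chart :
  exists p0 a b, det2 a b != 0 /\ forall p, subplane_aff K u v z p <-> Kplane_aff K p0 a b p.
Proof.
exists p0, a, b; split; last exact: subplane_aff_chart.
by rewrite det2_scale2 !mulf_neq0 ?invr_eq0.
Qed.

End AffineChart.

Lemma comb_swap12 (u v z : 'rV[L]_3) s t w : comb u v z s t w = comb u z v s w t.
Proof. by rewrite /comb addrAC. Qed.

Lemma comb_swap13 (u v z : 'rV[L]_3) s t w : comb u v z s t w = comb z v u w t s.
Proof. by rewrite /comb addrC (addrC (s *: u)) addrA. Qed.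

Lemma subplane_aff_swap12 (K : {vspace L}) u v z p :
  subplane_aff K u v z p <-> subplane_aff K u z v p.
Proof.
by split=> -[s [t [w [sK tK wK]]]]; exists s, w, t; rewrite comb_swap12.
Qed.

Lemma subplane_aff_swap13 (K : {vspace L}) u v z p :
  subplane_aff K u v z p <-> subplane_aff K z v u p.
Proof. by split=> -[s [t [w [sK tK wK]]]]; exists w, t, s; rewrite comb_swap13. Qed.

Lemma free_crd2_neq0 (u v z : 'rV[L]_3) : free [:: u; v; z] ->
  [|| crd u 2 != 0, crd v 2 != 0 | crd z 2 != 0].
Proof.
rewrite free_cons (free_cons v) seq1_free span_cons !span_seq1 => /and3P [nu nv nz].
apply/negPn/negP => /norP [/negPn/eqP u2 /norP [/negPn/eqP v2 /negPn/eqP z2]].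
have v0 : v != 0 by apply: contraNneq nv => ->; rewrite mem0v.
set d := crd v 0 * crd z 1 - crd v 1 * crd z 0.
have d0 : d != 0.
  apply: contraNneq nv => /(iffRL (line_eq v0 nz v2 z2)) <-; exact: memv_line.
move/negP: nu; apply; apply/memv_addP.
exists (((crd u 0 * crd z 1 - crd u 1 * crd z 0) / d) *: v); first by rewrite memvZ ?memv_line.
exists (((crd v 0 * crd u 1 - crd v 1 * crd u 0) / d) *: z); first by rewrite memvZ ?memv_line.
apply: row3_eq; rewrite /crd !mxE -!/(crd _ _).
- by rewrite /d; field; rewrite -/d.
- by rewrite /d; field; rewrite -/d.
- by rewrite u2 v2 z2 !mulr0 addr0.
Qed.

Lemma secant_subplane_Kplane (K : {subfield L}) u v z : secant_subplane K u v z ->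
  exists p0 a b, det2 a b != 0 /\ forall p, subplane_aff K u v z p <-> Kplane_aff K p0 a b p.
Proof.
case=> fr card_inf.
have [P1 [P2 [P12 [s1 [t1 [w1 [K1 [A0 A2 eP1]]]]] [s2 [t2 [w2 [K2 [B0 B2 eP2]]]]]]]] :=
  has_card_two card_inf (proj_line_card_gt1 _).
have detAB : det2 (c12 (comb u v z s1 t1 w1)) (c12 (comb u v z s2 t2 w2)) != 0.
  by apply: contra_neq P12 => /(line_eq A0 B0 A2 B2) eAB; rewrite eP1 eP2 eAB.
case/or3P: (free_crd2_neq0 fr) => [u2|v2|z2].
- case: K1 K2 => s1K t1K w1K [s2K t2K w2K].
  rewrite !(comb_swap13 u v z) in A2 B2 detAB.
  have [p0 [a [b [ab hp]]]] := subplane_aff_Kplane_chart u2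
    (And3 w1K t1K s1K) (And3 w2K t2K s2K) A2 B2 detAB.
  by exists p0, a, b; split=> // p; rewrite subplane_aff_swap13.
- case: K1 K2 => s1K t1K w1K [s2K t2K w2K].
  rewrite !(comb_swap12 u v z) in A2 B2 detAB.
  have [p0 [a [b [ab hp]]]] := subplane_aff_Kplane_chart v2
    (And3 s1K w1K t1K) (And3 s2K w2K t2K) A2 B2 detAB.
  by exists p0, a, b; split=> // p; rewrite subplane_aff_swap12.
- by have := subplane_aff_Kplane_chart z2 K1 K2 A2 B2 detAB.
Qed.

Section StandardFrame.
Variables (K : {subfield L}) (p0 a b : L * L).
Hypothesis det_ab : det2 a b != 0.
Local Notation u := (mkrow a.1 a.2 0).
Local Notation v := (mkrow b.1 b.2 0).
Local Notation z := (mkrow p0.1 p0.2 1).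

Lemma crd2_frame s t w : crd (comb u v z s t w) 2 = w.
Proof. by rewrite crd_comb !crd_mkrow2 !mulr0 !add0r mulr1. Qed.

Lemma c12_frame s t w : c12 (comb u v z s t w) = scale2 w p0 + lin2 a b s t.
Proof.
rewrite /c12 !crd_comb !crd_mkrow0 !crd_mkrow1 pairD /scale2 /lin2 /=.
by congr (_, _); ring.
Qed.

Lemma comb_frame_inj s t w s' t' w' :
  comb u v z s t w = comb u v z s' t' w' -> [/\ s = s', t = t' & w = w'].
Proof.
move=> e; have ew : w = w' by rewrite -(crd2_frame s t w) e crd2_frame.
have /(lin2_inj det_ab) [-> ->] : lin2 a b s t = lin2 a b s' t'.
  by apply: (addrI (scale2 w p0)); rewrite -c12_frame e c12_frame ew.
by [].
Qed.

Lemma frame_free : free [:: u; v; z].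
Proof.
have combE s t w : comb u v z s t w = s *: u + t *: v + w *: z by [].
have neq10 : (1 : L) != 0 := oner_neq0 L.
rewrite free_cons (free_cons v) seq1_free span_cons !span_seq1; apply/and3P; split.
- apply/negP => /memv_addP [_ /vlineP [k ->] [_ /vlineP [m ->] e]].
  have /comb_frame_inj [/eqP] : comb u v z 1 0 0 = comb u v z 0 k m.
    by rewrite !combE !scale0r scale1r !addr0 add0r.
  by rewrite (negbTE neq10).
- apply/negP => /vlineP [k e].
  have /comb_frame_inj [_ /eqP] : comb u v z 0 1 0 = comb u v z 0 0 k.
    by rewrite !combE !scale0r scale1r !addr0 !add0r.
  by rewrite (negbTE neq10).
- apply: contraNneq neq10 => ez.
  by rewrite -(crd2_frame 0 0 1) /comb !scale0r !add0r scale1r ez crd0.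
Qed.

Lemma frame_aff p : subplane_aff K u v z p <-> Kplane_aff K p0 a b p.
Proof.
have crdE s t w j : comb u v z s t w ord0 (inord j) = crd (comb u v z s t w) j by [].
split=> [[s [t [w [sK tK wK]]]]|[s [t [sK tK ->]]]].
  rewrite !crdE crd2_frame => w0 ->; exists (s / w), (t / w); split; rewrite ?rpred_div //.
  move: (c12_frame s t w); rewrite /c12 !pairD /scale2 /lin2 /= => -[-> ->].
  by congr (_, _); field.
exists s, t, 1; rewrite !crdE crd2_frame; split; rewrite ?mem1v ?oner_neq0 //.
move: (c12_frame s t 1); rewrite /c12 => -[-> ->].
by rewrite !divr1 /scale2 !mul1r.
Qed.

Lemma frame_secant : secant_subplane K u v z.
Proof.
split; first exact: frame_free.
have c12E s t : c12 (comb u v z s t 0) = lin2 a b s t.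
  by rewrite c12_frame pairD /scale2 /= !mul0r !add0r.
have comb_neq0 s t : (s, t) != (0, 0) -> comb u v z s t 0 != 0.
  move=> nz; apply: contraNneq (lin2_neq0 det_ab nz) => e.
  by apply/eqP; rewrite -c12E e /c12 !crd0.
apply: (has_card_ext (Q := fun P => exists s t,
   [/\ s \in K, t \in K, (s, t) != (0, 0) & P = <[comb u v z s t 0]>%VS])).
  move=> P; split=> [[s [t [w [[sK tK wK] [nz]]]]]|[s [t [sK tK nz ->]]]].
    rewrite -/(crd _ 2) crd2_frame => w0; rewrite w0 in nz * => ->.
    exists s, t; split=> //; apply: contraNneq nz => -[-> ->].
    by rewrite /comb !scale0r !add0r.
  by exists s, t, 0; split; rewrite ?mem0v // ?comb_neq0 // -/(crd _ 2) crd2_frame.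
apply: has_card_proj_line => s t s' t' sK tK s'K t'K nz nz'.
rewrite line_eq ?comb_neq0 ?crd2_frame // !c12E det2_lin2.
split=> [/eqP|->]; last by rewrite subrr mul0r.
by rewrite mulf_eq0 (negbTE det_ab) orbF subr_eq0 => /eqP.
Qed.

End StandardFrame.

Lemma is_phi_subplaneP (K : {subfield L}) (Pi : L * L -> Prop) :
  is_phi_subplane K Pi <->
  exists p0 a b, det2 a b != 0 /\ forall p, Pi p <-> Kplane_aff K p0 a b p.
Proof.
split=> [[u [v [z [sec defPi]]]]|[p0 [a [b [det_ab defPi]]]]].
  have [p0 [a [b [det_ab defaff]]]] := secant_subplane_Kplane sec.
  by exists p0, a, b; split=> // p; rewrite defPi defaff.
exists (mkrow a.1 a.2 0), (mkrow b.1 b.2 0), (mkrow p0.1 p0.2 1).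
by split=> [|p]; [exact: frame_secant | rewrite defPi frame_aff].
Qed.

Lemma aff_partE (W : {vspace SigV F L}) p : aff_part W p = ((p, 1) \in W).
Proof. by case: p. Qed.

Lemma exists_aff_part (W : {vspace SigV F L}) : not_in_Hinf W -> exists p, aff_part W p.
Proof.
case=> -[x c] xW /= c0; exists (c^-1 *: x); rewrite aff_partE.
suff -> : ((c^-1 *: x, 1) : SigV F L) = c^-1 *: (x, c) by rewrite memvZ.
by rewrite -[1 in LHS](mulVf c0).
Qed.

Section AffinePart.
Variables (W U : {vspace SigV F L}) (p1 : L * L).
Hypotheses (WU : meet_Hinf W U) (Wp1 : aff_part W p1).

Lemma aff_part_shift p : aff_part W p <-> ((p - p1, 0) : SigV F L) \in U.
Proof.
have W1 : (p1, 1) \in W by rewrite -aff_partE.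
rewrite aff_partE WU /=; split=> [Wp|[W' _]].
  by split=> //; rewrite -[0 : F^o](subrr 1); exact: (rpredB Wp W1).
by rewrite -[p](subrK p1) -[1 : F^o]add0r; exact: (rpredD W' W1).
Qed.

Lemma meet_HinfE v : v \in U <-> v.2 = 0 /\ aff_part W (v.1 + p1).
Proof.
case: v => x c /=; rewrite aff_part_shift addrK; split=> [xU|[-> //]].
by have [_ /= c0] := iffLR (WU _) xU; rewrite -c0.
Qed.

End AffinePart.

Lemma meet_Hinf_unique (W U W' U' : {vspace SigV F L}) :
  not_in_Hinf W -> meet_Hinf W U -> meet_Hinf W' U' ->
  (forall p, aff_part W p <-> aff_part W' p) -> U = U'.
Proof.
move=> /exists_aff_part [p1 Wp1] WU W'U' sameW.
have W'p1 : aff_part W' p1 by rewrite -sameW.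
apply/vspaceP => v; apply/idP/idP.
  by case/(meet_HinfE WU Wp1) => v2 /sameW Wv; apply/(meet_HinfE W'U' W'p1).
by case/(meet_HinfE W'U' W'p1) => v2 /sameW Wv; apply/(meet_HinfE WU Wp1).
Qed.

Lemma aff_part_Kplane (K : {vspace L}) (W : {vspace SigV F L}) p1 a b :
  meet_Hinf W (spread_sum a b K K) -> aff_part W p1 ->
  forall p, aff_part W p <-> Kplane_aff K p1 a b p.
Proof.
move=> WU Wp1 p; rewrite (aff_part_shift WU Wp1).
split=> [/memv_spread_sum [s [t [sK tK]]]|[s [t [sK tK ->]]]].
  by rewrite spread_vec_add => /(congr1 fst) /= e; exists s, t; rewrite -e addrC subrK.
by apply/memv_spread_sum; exists s, t; rewrite spread_vec_add (addrC p1) addrK.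
Qed.

Lemma Kplane_aff_closure (K : {subfield L}) p0 a b : det2 a b != 0 ->
  exists W : {vspace SigV F L},
    [/\ \dim W = (2 * \dim K).+1, not_in_Hinf W,
        forall p, aff_part W p <-> Kplane_aff K p0 a b p
      & meet_Hinf W (spread_sum a b K K)].
Proof.
move=> det_ab; set U := spread_sum a b K K; pose e : SigV F L := (p0, 1).
have U2 x : x \in U -> x.2 = 0.
  by case/memv_spread_sum=> s [t [_ _ ->]]; rewrite spread_vec_add.
have e2 : e.2 != 0 by exact: oner_neq0.
have eW : e \in (U + <[e]>)%VS by apply: subvP (addvSr _ _) _ (memv_line e).
have WU : meet_Hinf (U + <[e]>) U.
  move=> v; split=> [vU|[/memv_addP [x xU [_ /vlineP [c ->] ->]]]].
    by split; [exact: subvP (addvSl _ _) _ vU | exact: U2].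
  have -> : (x + c *: e).2 = x.2 + c * 1 by [].
  by rewrite U2 // add0r mulr1 => ->; rewrite scale0r addr0.
exists (U + <[e]>)%VS; split=> //.
- rewrite dimv_disjoint_sum; last first.
    apply/eqP; rewrite -subv0; apply/subvP => x; rewrite memv_cap memv0.
    case/andP=> /U2 x2 /vlineP [c ex]; move: x2.
    by rewrite ex (_ : (c *: e).2 = c * 1) // mulr1 => ->; rewrite scale0r.
  have enz : e != 0 by apply: contraNneq e2 => ->.
  by rewrite dim_spread_sum // dim_vline enz addnn -mul2n addn1.
- by exists e.
- by apply: aff_part_Kplane WU _; rewrite aff_partE.
Qed.

End PhiSubplanes.

Theorem theorem3p1 (F : finFieldType) (L : fieldExtType F) (K : {subfield L})
  (Pi : L * L -> Prop) :
  (is_phi_subplane K Pi <->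
   exists W U : {vspace SigV F L},
     [/\ \dim W = (2 * \dim K).+1, not_in_Hinf W,
         (forall p, Pi p <-> aff_part W p),
         meet_Hinf W U & cond_ii (\dim K) U])
  /\
  (is_phi_subplane K Pi ->
   forall W U : {vspace SigV F L},
     not_in_Hinf W -> (forall p, Pi p <-> aff_part W p) -> meet_Hinf W U ->
     forall S, D_elt S -> (U :&: S)%VS != 0%VS -> Dk_elt K (U :&: S)%VS).
Proof.
have closure p0 a b (det_ab : det2 a b != 0) (defPi : forall p, Pi p <-> Kplane_aff K p0 a b p) :
    exists W, [/\ \dim W = (2 * \dim K).+1, not_in_Hinf W,
      forall p, Pi p <-> aff_part W p & meet_Hinf W (spread_sum a b K K)].
  have [W [dimW WH Waff WU]] := Kplane_aff_closure K p0 det_ab.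
  by exists W; split=> // p; rewrite defPi Waff.
split; first split.
- case/is_phi_subplaneP=> p0 [a [b [det_ab defPi]]].
  have [W [dimW WH Waff WU]] := closure p0 a b det_ab defPi.
  by exists W, (spread_sum a b K K); split=> //; exact: cond_ii_spread_sum.
- case=> W [U [dimW /exists_aff_part [p1 Wp1] defPi WU /cond_ii_spread_sumP]].
  case=> a [b [det_ab defU]]; rewrite defU in WU.
  by apply/is_phi_subplaneP; exists p1, a, b; split=> // p; rewrite defPi (aff_part_Kplane WU Wp1).
case/is_phi_subplaneP=> p0 [a [b [det_ab defPi]]] W U WH defPi' WU S DS neS.
have [W0 [_ W0H W0aff W0U]] := closure p0 a b det_ab defPi.
have defU : spread_sum a b K K = U.
  by apply: (meet_Hinf_unique W0H W0U WU) => p; rewrite -W0aff defPi'.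
by rewrite -defU in neS *; exact: Dk_elt_cap_spread_sum.
Qed.
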